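(* Let $S$ be a positive integer, $M>0$, and let $G=\bigcup_{i=1}^t\left[\theta_i-\frac{\zeta_i}{M},\theta_i+\frac{\zeta_i}{M}\right]\subset\mathbb{R}$ be a union of $t$ pairwise disjoint intervals, with $t\le S$, $\zeta_i\ge0$ and $\sum_{i=1}^t\zeta_i\le S\zeta$. If $\zeta\le\frac{1}{8S(2S-1)}$, then there exists $m\in[2,4]$ such that $$\left[\theta_i-\frac{\zeta_i}{M}-\frac{q}{Mm},\ \theta_i+\frac{\zeta_i}{M}-\frac{q}{Mm}\right]\cap\left[\theta_j-\frac{\zeta_j}{M},\ \theta_j+\frac{\zeta_j}{M}\right]=\varnothing$$ for all $1\le i,j\le t$ and all $q\in\mathbb{Z}\setminus\{0\}$. *)

From HB Require Import structures.
From mathcomp Require Import all_boot all_order all_algebra.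
From mathcomp Require Export reals.
From mathcomp Require Export all_boot all_order all_algebra.
Set Implicit Arguments. Unset Strict Implicit. Unset Printing Implicit Defensive.
Import Order.TTheory GRing.Theory Num.Theory.
Local Open Scope ring_scope.

Definition cint (R : realType) (c r : R) : pred R :=
  fun x => (c - r <= x) && (x <= c + r).

(* Put p = 1/m, d = M (theta_i - theta_j) and w = zeta_i + zeta_j.  A common point of the two
   intervals means |d - q p| <= w; for q = n > 0 this puts p in [(d - w)/n, (d + w)/n], and
   q < 0 is the same with i and j swapped.  When d <= 0 these intervals lie below 1/4.  When
   d > 0 only the n with 2(d - w) <= n <= 4(d + w) can meet [1/4, 1/2], each in length at most
   2w/n, so together they cover at most 4w(1 + 4w) of it.  Each unordered pair {i, j} has
   d > 0 for at most one order, so with Z = sum_i zeta_i <= 1/(8(2S - 1)) the bad ratios cover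
   at most 4(1 + 8Z)(S - 1)Z < 1/4 of [1/4, 1/2], and a good p remains. *)

From HB Require Import structures.
From mathcomp Require Import all_boot all_order all_algebra reals.
From mathcomp Require Import ring lra zify.
Import Order.TTheory GRing.Theory Num.Theory.
Local Open Scope ring_scope.

Section BadRatios.
Context {R : realType}.
Implicit Types a b l u x : R.

Definition overlap a b l u : R := Num.max 0 (Num.min u b - Num.max l a).

Local Ltac minmax_lra :=
  repeat match goal with
  | |- context[Order.max ?x ?y] => case: (leP x y)
  | |- context[Order.min ?x ?y] => case: (leP x y)
  end; intros; lra.

Lemma overlap_ge0 a b l u : 0 <= overlap a b l u.
Proof. rewrite /overlap; minmax_lra. Qed.

Lemma overlap_le a b l u : l <= u -> overlap a b l u <= u - l.
Proof. move=> ?; rewrite /overlap; minmax_lra. Qed.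

Lemma overlap0_le a b l u : u <= a -> overlap a b l u = 0.
Proof. move=> ?; rewrite /overlap; minmax_lra. Qed.

Lemma overlap0_ge a b l u : b <= l -> overlap a b l u = 0.
Proof. move=> ?; rewrite /overlap; minmax_lra. Qed.

Lemma le_overlap a a' b l u : a <= a' -> overlap a' b l u <= overlap a b l u.
Proof. move=> ?; rewrite /overlap; minmax_lra. Qed.

Lemma overlap_from_left a b l u : a <= b -> l <= a <= u ->
  overlap a b l u = Num.min u b - a.
Proof. move=> ? /andP[? ?]; rewrite /overlap; minmax_lra. Qed.

Lemma uncovered_point {I : eqType} (lo up : I -> R) (s : seq I) {a b} :
  a <= b -> \sum_(k <- s) overlap a b (lo k) (up k) < b - a ->
  exists2 x, a <= x <= b & forall k, k \in s -> ~~ (lo k <= x <= up k).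
Proof.
elim: {s}_.+1 {-2}s (ltnSn (size s)) a => // n IH s; rewrite ltnS => size_s a ab.
have [/hasP[k s_k a_k] | /hasPn a_free] := boolP (has (fun k => lo k <= a <= up k) s);
  last by exists a; [rewrite lexx ab | exact: a_free].
rewrite (perm_big _ (perm_to_rem s_k)) big_cons /= overlap_from_left //.
set rest := \sum_(j <- rem k s) _ => sum_lt.
have rest_ge0 : 0 <= rest by apply: sumr_ge0 => j _; exact: overlap_ge0.
have up_k_lt : up k + rest < b by move: sum_lt; case: (leP (up k) b) => ? ?; lra.
(* Restart strictly to the right of [up k], keeping half of the slack [b - up k - rest]. *)
pose a' := (up k + b - rest) / 2.
have [x /andP[a'x xb] x_free] : exists2 x, a' <= x <= b &
    forall j, j \in rem k s -> ~~ (lo j <= x <= up j).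
  apply: IH; first by rewrite size_rem //; move: size_s; case: (s) s_k => //= *; lia.
  - rewrite /a'; lra.
  - apply: le_lt_trans (_ : rest < b - a'); last by rewrite /a'; lra.
    by apply: ler_sum => j _; apply: le_overlap; move: a_k => /andP[]; rewrite /a'; lra.
have x_gt : up k < x by move: a'x; rewrite /a'; lra.
exists x; first by apply/andP; split; move: a_k => /andP[]; lra.
move=> j; rewrite (perm_mem (perm_to_rem s_k)) inE => /predU1P[->|/x_free //].
by apply/negP => /andP[_]; rewrite leNgt x_gt.
Qed.

Lemma count_iota_window (L U : R) (m n : nat) :
  (count (fun k : nat => L <= k%:R <= U) (iota m n))%:R <= Num.max 0 (U - L + 1).
Proof.
suff count_le : forall m, (count (fun k : nat => L <= k%:R <= U) (iota m n))%:R
    <= Num.max 0 (U - Num.max L m%:R + 1).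
  by move: (count_le m); minmax_lra.
elim: n => [|n IH] {}m /=; first by minmax_lra.
move: (IH m.+1); rewrite natrD -natr1.
by case: (leP L m%:R); case: (leP m%:R U) => /=; minmax_lra.
Qed.

Lemma sum_overlap_multiples (d w : R) (N : nat) : 0 < d -> 0 <= w ->
  \sum_(1 <= n < N) overlap (1/4) (1/2) ((d - w) / n%:R) ((d + w) / n%:R)
    <= 4 * w * (1 + 4 * w).
Proof.
move=> d_gt0 w_ge0.
pose L := Num.max 1 (2 * (d - w)).
have L_ge : 1 <= L /\ 2 * (d - w) <= L by rewrite /L; split; minmax_lra.
pose window (n : nat) := 2 * (d - w) <= n%:R <= 4 * (d + w).
have term_le n : (1 <= n < N)%N ->
    overlap (1/4) (1/2) ((d - w) / n%:R) ((d + w) / n%:R)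
    <= if window n then 2 * w / L else 0.
  case/andP=> n_ge1 _; have n_gt0 : 0 < n%:R :> R by rewrite ltr0n.
  rewrite /window; case: (leP (2 * (d - w)) n%:R) => lo /=; last first.
    by rewrite overlap0_ge // ler_pdivlMr //; lra.
  case: (leP n%:R (4 * (d + w))) => hi /=; last first.
    by rewrite overlap0_le // ler_pdivrMr //; lra.
  have lu : (d - w) / n%:R <= (d + w) / n%:R.
    by apply: ler_wpM2r; [rewrite invr_ge0 ltW | lra].
  apply: le_trans (overlap_le _ _ _ _ lu) _.
  have -> : (d + w) / n%:R - (d - w) / n%:R = 2 * w / n%:R by field; rewrite gt_eqF.
  apply: ler_wpM2l; first lra.
  have L_gt0 : 0 < L by lra.
  by rewrite lef_pV2 ?posrE // /L ge_max ler1n n_ge1 lo.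
apply: le_trans (ler_sum_nat term_le) _.
rewrite -big_mkcond /= big_const_seq iter_addr_0 -[X in X <= _]mulr_natr.
have c_ge0 : 0 <= 2 * w / L by apply: divr_ge0; lra.
apply: le_trans (ler_wpM2l c_ge0 (count_iota_window _ _ _ _)) _.
have window_le : Num.max 0 (4 * (d + w) - 2 * (d - w) + 1) <= L * (2 + 8 * w).
  rewrite ge_max; apply/andP; split; nra.
apply: le_trans (ler_wpM2l c_ge0 window_le) _.
by rewrite mulrA divfK ?gt_eqF //; lra.
Qed.

Lemma sum_overlap_multiples_nonpos (d w : R) (N : nat) : d <= 0 -> w <= 1/4 ->
  \sum_(1 <= n < N) overlap (1/4) (1/2) ((d - w) / n%:R) ((d + w) / n%:R) = 0.
Proof.
move=> d_le0 w_le; rewrite big_nat big1 // => n /andP[n_ge1 _].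
have n_ge1R : 1 <= n%:R :> R by rewrite ler1n.
by rewrite overlap0_le // ler_pdivrMr; lra.
Qed.

Lemma exists_ratio_far_from_multiples {I : finType} (d w : I -> R) :
  (forall k, 0 <= w k) -> (forall k, d k <= 0 -> w k <= 1/4) ->
  \sum_(k | 0 < d k) 4 * w k * (1 + 4 * w k) < 1/4 ->
  exists2 p, 1/4 <= p <= 1/2 &
    forall k (n : nat), (0 < n)%N -> w k < `|d k - n%:R * p|.
Proof.
move=> w_ge0 w_le sum_lt.
(* As p >= 1/4, no multiple n p with n >= N k reaches [d k - w k, d k + w k]. *)
pose N k := (Num.truncn (4 * (d k + w k))).+1.
pose s := [seq (k, n) | k <- index_enum I, n <- index_iota 1 (N k)].
pose lo (kn : I * nat) := (d kn.1 - w kn.1) / kn.2%:R.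
pose up (kn : I * nat) := (d kn.1 + w kn.1) / kn.2%:R.
have total : \sum_(kn <- s) overlap (1/4) (1/2) (lo kn) (up kn) < 1/2 - 1/4.
  rewrite /s /lo /up big_allpairs_dep /= (_ : 1/2 - 1/4 = 1/4); last lra.
  apply: le_lt_trans sum_lt; rewrite [X in _ <= X]big_mkcond.
  apply: ler_sum => k _; case: ifP => [d_gt0 | /negbT]; first exact: sum_overlap_multiples.
  by rewrite -leNgt => d_le0; rewrite sum_overlap_multiples_nonpos ?w_le.
have quarter_le_half : 1/4 <= 1/2 :> R by lra.
have [p p_range p_free] := uncovered_point lo up s quarter_le_half total.
exists p => // k n n_gt0; rewrite ltNge ler_norml; apply/negP => /andP[close_lo close_hi].
have [p_lo _] := andP p_range.
have n_gt0R : 0 < n%:R :> R by rewrite ltr0n.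
have kn_in_s : (k, n) \in s.
  apply/allpairsPdep; exists k, n; split; rewrite ?mem_index_enum //.
  rewrite mem_index_iota n_gt0 ltnS truncn_ge_nat; nra.
have := p_free _ kn_in_s.
by rewrite /lo /up /= ler_pdivrMr // ler_pdivlMr // negb_and -!ltNge; case/orP; lra.
Qed.

Lemma sum_asym_pairs {I : finType} {P : rel I} {r : I -> R} :
  (forall i j, P i j -> ~~ P j i) -> (forall i, 0 <= r i) ->
  \sum_(k : I * I | P k.1 k.2) (r k.1 + r k.2) <= (#|I|.-1)%:R * \sum_i r i.
Proof.
move=> P_asym r_ge0.
have P_irr i : P i i = false by apply/negP => Pii; move: (P_asym i i Pii); rewrite Pii.
rewrite big_mkcond -(pair_bigA _ (fun i j => if P i j then r i + r j else 0)) /=.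
(* After symmetrizing, asymmetry bounds [P i j] + [P j i] by [i != j]. *)
have -> : \sum_i \sum_j (if P i j then r i + r j else 0) =
    \sum_i \sum_j ((if P i j then r i else 0) + (if P j i then r i else 0)).
  under [RHS]eq_bigr do rewrite big_split /=.
  rewrite big_split /= [X in _ = _ + X]exchange_big -big_split /=.
  apply: eq_bigr => i _; rewrite -big_split; apply: eq_bigr => j _ /=.
  by case: (P i j); rewrite ?addr0.
rewrite mulr_natl -sumrMnl; apply: ler_sum => i _.
rewrite -(cardC1 i) -sumr_const [X in _ <= X]big_mkcond; apply: ler_sum => j _.
rewrite inE; case: eqVneq => [->|_]; first by rewrite P_irr addr0.
case Pij: (P i j) => /=; last by case: (P j i); rewrite add0r ?lexx ?r_ge0.
by rewrite (negbTE (P_asym _ _ Pij)) addr0.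
Qed.

Lemma far_from_int_multiples {I : finType} (d w : I -> I -> R) (p : R) :
  (forall i j, d j i = - d i j) -> (forall i j, w j i = w i j) ->
  (forall i j (n : nat), (0 < n)%N -> w i j < `|d i j - n%:R * p|) ->
  forall i j (q : int), q != 0 -> w i j < `|d i j - q%:~R * p|.
Proof.
move=> d_anti w_sym far i j [] n.
  by rewrite -pmulrn => n_neq0; apply: far; rewrite lt0n.
rewrite NegzE intrN -pmulrn => _.
have -> : d i j - - n.+1%:R * p = - (d j i - n.+1%:R * p) by rewrite d_anti; ring.
by rewrite normrN -w_sym; apply: far.
Qed.

Lemma cint_center_dist {c1 c2 r1 r2 x : R} :
  cint c1 r1 x -> cint c2 r2 x -> `|c1 - c2| <= r1 + r2.
Proof. by rewrite /cint ler_norml => /andP[? ?] /andP[? ?]; apply/andP; split; lra. Qed.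

Lemma cint_scaled_center_dist {M c1 c2 r1 r2 x : R} : 0 < M ->
  cint c1 (r1 / M) x -> cint c2 (r2 / M) x -> `|M * c1 - M * c2| <= r1 + r2.
Proof.
move=> M_gt0 x1 x2; rewrite -mulrBr normrM gtr0_norm // -ler_pdivlMl //.
by rewrite mulrDr ![M^-1 * _]mulrC; exact: cint_center_dist x1 x2.
Qed.

Lemma budget_lt_quarter {s c Z : R} : 1 <= s -> c <= s - 1 -> 0 <= Z ->
  8 * (2 * s - 1) * Z <= 1 -> 4 * (1 + 8 * Z) * (c * Z) < 1/4.
Proof.
move=> s_ge1 c_le Z_ge0 Z_le.
apply: (le_lt_trans (_ : _ <= 4 * (1 + 8 * Z) * ((s - 1) * Z))); first nra.
(* With e = 2s - 1 and e Z <= 1/8, e^2 times the left side is at most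
   (e - 1) e / 4 + (e - 1) / 4 = (e^2 - 1) / 4. *)
set e := 2 * s - 1 in Z_le.
have e_ge1 : 1 <= e by rewrite /e; lra.
have eZ_ge0 : 0 <= e * Z by rewrite mulr_ge0 //; lra.
have eZ_le : e * Z <= 1/8 by lra.
have h1 : 0 <= (e - 1) * e * (1/8 - e * Z) by rewrite !mulr_ge0 //; lra.
have h2 : 0 <= (e - 1) * (1/64 - (e * Z) ^+ 2) by rewrite mulr_ge0 //; nra.
rewrite -(ltr_pM2l (_ : 0 < e ^+ 2)); last by nra.
have -> : s - 1 = (e - 1) / 2 by rewrite /e; lra.
nra.
Qed.

Lemma pair_budget_lt {I : finType} {S : nat} (a r : I -> R) :
  (0 < S)%N -> (#|I| <= S)%N -> (forall i, 0 <= r i) ->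
  8 * (2 * S%:R - 1) * \sum_i r i <= 1 ->
  \sum_(k : I * I | 0 < a k.1 - a k.2) 4 * (r k.1 + r k.2) * (1 + 4 * (r k.1 + r k.2))
    < 1/4.
Proof.
move=> S_gt0 card_le r_ge0 sum_small; set Z := \sum_i r i in sum_small.
have Z_ge0 : 0 <= Z by rewrite sumr_ge0.
have S_ge1 : 1 <= S%:R :> R by rewrite ler1n.
have r_le i : r i <= Z by rewrite /Z (bigD1 i) //= lerDl sumr_ge0.
have card_le' : (#|I|.-1)%:R <= S%:R - 1 :> R.
  by rewrite -[S in S%:R - 1](prednK S_gt0) -natr1 addrK ler_nat; lia.
apply: le_lt_trans (budget_lt_quarter S_ge1 card_le' Z_ge0 sum_small).
apply: le_trans (_ : _ <= \sum_(k | 0 < a k.1 - a k.2) 4 * (1 + 8 * Z) * (r k.1 + r k.2)) _.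
  apply: ler_sum => k _; have := r_le k.1; have := r_le k.2.
  by have := r_ge0 k.1; have := r_ge0 k.2; nra.
rewrite -mulr_sumr ler_wpM2l //; first lra.
apply: (sum_asym_pairs (P := fun i j => 0 < a i - a j)) => // i j.
by rewrite !subr_gt0 => /lt_gtF ->.
Qed.

End BadRatios.

Theorem lemma2 (R : realType) (S t : nat) (M zeta : R)
  (theta zetas : 'I_t -> R) :
  (0 < S)%N -> 0 < M -> (t <= S)%N ->
  (forall i, 0 <= zetas i) ->
  (forall i j : 'I_t, i != j -> forall x : R,
      ~~ (cint (theta i) (zetas i / M) x && cint (theta j) (zetas j / M) x)) ->
  \sum_(i < t) zetas i <= S%:R * zeta ->
  zeta <= 1 / (8 * S%:R * (2 * S%:R - 1)) ->
  exists m : R, 2 <= m <= 4 /\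
    forall (i j : 'I_t) (q : int), q != 0 -> forall x : R,
      ~~ (cint (theta i - q%:~R / (M * m)) (zetas i / M) x
          && cint (theta j) (zetas j / M) x).
Proof.
move=> S_gt0 M_gt0 t_le_S zetas_ge0 _ sum_le zeta_le.
have S_ge1 : 1 <= S%:R :> R by rewrite ler1n.
have sum_small : 8 * (2 * S%:R - 1) * \sum_i zetas i <= 1.
  by move: zeta_le; rewrite ler_pdivlMr; nra.
have card_le : (#|'I_t| <= S)%N by rewrite card_ord.
pose a i := M * theta i; pose d i j := a i - a j; pose w i j := zetas i + zetas j.
have w_le i j : w i j <= 1/4.
  have zetas_le k : zetas k <= \sum_i zetas i by rewrite (bigD1 k) //= lerDl sumr_ge0.
  by have := zetas_le i; have := zetas_le j; rewrite /w; nra.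
have [p /andP[p_lo p_hi] far] := exists_ratio_far_from_multiples
  (fun k => d k.1 k.2) (fun k => w k.1 k.2)
  (fun k => addr_ge0 (zetas_ge0 k.1) (zetas_ge0 k.2))
  (fun k _ => w_le k.1 k.2) (pair_budget_lt a zetas S_gt0 card_le zetas_ge0 sum_small).
have far_int := far_from_int_multiples d w p (fun i j => esym (opprB _ _))
  (fun i j => addrC _ _) (fun i j => far (i, j)).
exists p^-1; split; first by rewrite -[2]invrK -[4]invrK !lef_pV2 ?posrE ?invr_gt0; lra.
move=> i j q q_neq0 x; apply/negP => /andP[x_i x_j].
have := far_int i j q q_neq0; rewrite ltNge.
have -> : d i j - q%:~R * p = M * (theta i - q%:~R / (M * p^-1)) - M * theta j.
  by rewrite /d /a; field; rewrite !gt_eqF //; lra.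
by rewrite (cint_scaled_center_dist M_gt0 x_i x_j).
Qed.
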